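(* Let $\mathcal G$ be the graph defined below. There is no mixed $1$-stack $1$-queue layout $(<,\{S,Q\})$ of $\mathcal G$ for which there exist an edge $(v_1,v_2)\in Q$ and three distinct pairs of twins $s_i,t_i$ ($1\le i\le 3$) with $v_1<s_i<v_2$ and $v_1<t_i<v_2$ for all $1\le i\le 3$.
   Context: Graph $\mathcal G$: take two vertices $A,B$ and $19$ copies of a gadget $H$, identified at $A$ and $B$. Each copy of $H$ consists of two further vertices $s,t$ (called twins) joined by the twin edge $(s,t)$, the edges $(A,s),(A,t),(B,s),(B,t)$, and seven further vertices (called connectors), each of degree $2$ and adjacent to exactly $s$ and $t$. ($A$ and $B$ are not adjacent.) For a vertex ordering $<$ and an edge $e$, let $L(e)<R(e)$ be its endpoints; edges $e,f$ cross if $L(e)<L(f)<R(e)<R(f)$ and nest if $L(e)<L(f)<R(f)<R(e)$. A stack is an edge set with no two crossing edges, a queue an edge set with no two nested edges. A mixed $1$-stack $1$-queue layout is a vertex ordering $<$ together with a partition of the edge set into a stack $S$ and a queue $Q$. *)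

From HB Require Import structures.
From mathcomp Require Import all_boot.
Set Implicit Arguments. Unset Strict Implicit. Unset Printing Implicit Defensive.

(* Vertices of the graph G: A, B, and for each copy i < 19 of the gadget H
   the twins s_i, t_i and seven connectors c_{i,j} (j < 7). *)
Inductive vert :=
| VA | VB
| VS of 'I_19
| VT of 'I_19
| VC of 'I_19 & 'I_7.

Definition vert_enc (v : vert) : unit + unit + ('I_19 + 'I_19 + 'I_19 * 'I_7) :=
  match v with
  | VA => inl (inl tt) | VB => inl (inr tt)
  | VS i => inr (inl (inl i)) | VT i => inr (inl (inr i))
  | VC i j => inr (inr (i, j)) end.
Definition vert_dec (x : unit + unit + ('I_19 + 'I_19 + 'I_19 * 'I_7)) : vert :=
  match x with
  | inl (inl _) => VA | inl (inr _) => VB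
  | inr (inl (inl i)) => VS i | inr (inl (inr i)) => VT i
  | inr (inr (i, j)) => VC i j end.
Lemma vert_encK : cancel vert_enc vert_dec. Proof. by case. Qed.
HB.instance Definition _ := Finite.copy vert (can_type vert_encK).

Definition adj0 (u v : vert) : bool :=
  match u, v with
  | VS i, VT j => i == j
  | VA, VS _ | VA, VT _ => true
  | VB, VS _ | VB, VT _ => true
  | VS i, VC j _ | VT i, VC j _ => i == j
  | _, _ => false end.

Definition adj (u v : vert) : bool := adj0 u v || adj0 v u.

(* A mixed 1-stack 1-queue layout: a vertex ordering given by an injective
   position map [pos], and a partition of the edge set into a stack S and a
   queue Q, given by a symmetric indicator [inS] (an edge {u,v} is in S iff
   [inS u v], and in Q otherwise). *)
Record layout := Layout {
  pos : vert -> nat;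
  inS : vert -> vert -> bool }.

Definition lt_v (L : layout) (u v : vert) := pos L u < pos L v.

(* e = (a,b), f = (c,d) with a<b, c<d *)
Definition cross (L : layout) (a b c d : vert) :=
  [/\ lt_v L a c, lt_v L c b & lt_v L b d].
Definition nest (L : layout) (a b c d : vert) :=
  [/\ lt_v L a c, lt_v L c d & lt_v L d b].

Definition inSE (L : layout) u v := adj u v && inS L u v.
Definition inQE (L : layout) u v := adj u v && ~~ inS L u v.

Definition is_mixed_layout (L : layout) : Prop :=
  [/\ injective (pos L),
      (forall u v, inS L u v = inS L v u),
      (forall a b c d, inSE L a b -> inSE L c d -> lt_v L a b -> lt_v L c d ->
          ~ cross L a b c d)
    &
      (forall a b c d, inQE L a b -> inQE L c d -> lt_v L a b -> lt_v L c d ->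
          ~ nest L a b c d)].

From mathcomp Require Import all_boot zify.
Set Implicit Arguments. Unset Strict Implicit. Unset Printing Implicit Defensive.

(* An edge with both ends strictly under the queue edge v1v2 would nest inside
   it, so it lies in the stack; in particular the twin edges do.  In one gadget
   with twins l < r, take the connectors whose edges to l and r share a page.
   Two of them lying in the same region (left of l, between l and r, right of
   r) and using the same page give two crossing stack edges or two nested
   queue edges, so there are at most six of them: some connector c of each
   gadget has its two edges in different pages, and c lies outside v1v2.
   Two of the three gadgets have such connectors on the same side of v1v2,
   say (reversing the layout if needed) both before v1.  Their stack and queue
   edges, together with the two twin edges, admit no relative order of the
   four twin vertices. *)

Lemma adj_sym u v : adj u v = adj v u.
Proof. by rewrite /adj orbC. Qed.

Lemma adj_neq u v : adj u v -> u != v.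
Proof. by apply: contraTneq => ->; case: v. Qed.

Section MixedLayout.

Variable L : layout.
Hypothesis HL : is_mixed_layout L.
Local Notation p := (pos L).

Lemma pos_inj : injective p.
Proof. by case: HL. Qed.

Lemma adj_pos_neq u v : adj u v -> p u != p v.
Proof. by move/adj_neq; apply: contra => /eqP/pos_inj ->. Qed.

Lemma inS_sym u v : inS L u v = inS L v u.
Proof. by case: HL. Qed.

Lemma inSE_sym u v : inSE L u v = inSE L v u.
Proof. by rewrite /inSE adj_sym inS_sym. Qed.

Lemma inQE_sym u v : inQE L u v = inQE L v u.
Proof. by rewrite /inQE adj_sym inS_sym. Qed.

Lemma inSE_adj u v : adj u v -> inS L u v -> inSE L u v.
Proof. by rewrite /inSE => -> ->. Qed.

Lemma inQE_adj u v : adj u v -> ~~ inS L u v -> inQE L u v.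
Proof. by rewrite /inQE => -> ->. Qed.

Lemma stack_no_cross a b c d : inSE L a b -> inSE L c d ->
  p a < p c -> p c < p b -> p b < p d -> False.
Proof.
case: HL => _ _ stack _ ab cd ac cb bd.
by apply: (stack a b c d) => //; rewrite /lt_v; lia.
Qed.

Lemma queue_no_nest a b c d : inQE L a b -> inQE L c d ->
  p a < p c -> p c < p d -> p d < p b -> False.
Proof.
case: HL => _ _ _ queue ab cd ac cd' db.
by apply: (queue a b c d) => //; rewrite /lt_v; lia.
Qed.

Lemma inS_under_queue_edge v1 v2 a b : inQE L v1 v2 -> adj a b ->
  p v1 < p a < p v2 -> p v1 < p b < p v2 -> inS L a b.
Proof.
move=> q12 ab /andP[v1a av2] /andP[v1b bv2]; apply/negPn/negP => nab.
have qab : inQE L a b by rewrite /inQE ab.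
case: (ltngtP (p a) (p b)) (adj_pos_neq ab) => // [ltab | ltba] _.
- by apply: (queue_no_nest q12 qab).
- by rewrite inQE_sym in qab; apply: (queue_no_nest q12 qab).
Qed.

Section Connectors.

Variables (v1 v2 l r : vert) (n : nat) (cs : 'I_n -> vert).
Hypotheses (q12 : inQE L v1 v2) (cs_inj : injective cs)
  (adj_l : forall k, adj (cs k) l) (adj_r : forall k, adj (cs k) r)
  (v1l : p v1 < p l) (lr : p l < p r) (rv2 : p r < p v2)
  (same_page : forall k, inS L l (cs k) = inS L r (cs k)).

Definition side c : 'I_3 := inord ((p l < p c) + (p r < p c)).

Definition connector_class k := (side (cs k), inS L l (cs k)).

Lemma side_eq_cases c c' : p c < p c' -> adj c l -> adj c r -> adj c' l -> adj c' r ->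
  side c = side c' -> p c' < p l \/ p l < p c /\ p c' < p r \/ p r < p c.
Proof.
move=> cc' /adj_pos_neq cl /adj_pos_neq cr /adj_pos_neq c'l /adj_pos_neq c'r.
by move/(congr1 val); rewrite /= !inordK; lia.
Qed.

Lemma connector_class_ordered k k' : p (cs k) < p (cs k') ->
  connector_class k != connector_class k'.
Proof.
rewrite /connector_class xpair_eqE.
move: (adj_l k) (adj_r k) (same_page k) (adj_l k') (adj_r k') (same_page k').
move: (cs k) (cs k') => c c' cl cr pc c'l c'r pc' cc'; apply/negP.
case/andP => /eqP/(side_eq_cases cc' cl cr c'l c'r) sides /eqP pcc'.
have [[Scl Scr Sc'l Sc'r] | [Qcl Qcr Qc'l Qc'r]] :
    [/\ inS L c l, inS L c r, inS L c' l & inS L c' r] \/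
    [/\ ~~ inS L c l, ~~ inS L c r, ~~ inS L c' l & ~~ inS L c' r].
  rewrite !(inS_sym _ l) !(inS_sym _ r) -pc -pc' -pcc'.
  by case: (inS L l c); [left | right].
- have Slc : inSE L l c by rewrite inSE_sym; apply: inSE_adj.
  have Slc' : inSE L l c' by rewrite inSE_sym; apply: inSE_adj.
  have Scr' := inSE_adj cr Scr; have Sc'r' := inSE_adj c'r Sc'r.
  case: sides => [c'_l | [[l_c c'_r] | r_c]].
  + exact: (stack_no_cross (inSE_adj cl Scl) Sc'r' cc' c'_l lr).
  + exact: (stack_no_cross Slc' Scr' l_c cc' c'_r).
  + by rewrite inSE_sym in Sc'r'; apply: (stack_no_cross Slc Sc'r' lr r_c cc').
- case: sides => [c'_l | [[l_c c'_r] | r_c]].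
  + exact: (queue_no_nest (inQE_adj cr Qcr) (inQE_adj c'l Qc'l) cc' c'_l lr).
  + have c'_in : p v1 < p c' < p v2.
      by rewrite (ltn_trans v1l (ltn_trans l_c cc')) (ltn_trans c'_r rv2).
    have l_in : p v1 < p l < p v2 by rewrite v1l (ltn_trans lr rv2).
    by rewrite (inS_under_queue_edge q12 c'l c'_in l_in) in Qc'l.
  + have Qlc' := inQE_adj c'l Qc'l; have Qrc := inQE_adj cr Qcr.
    rewrite inQE_sym in Qlc'; rewrite inQE_sym in Qrc.
    exact: (queue_no_nest Qlc' Qrc lr r_c cc').
Qed.

Lemma connector_class_inj : injective connector_class.
Proof.
move=> k k' e; case: (ltngtP (p (cs k)) (p (cs k'))) => [lt | gt | /pos_inj/cs_inj //].
- by have := connector_class_ordered lt; rewrite e eqxx.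
- by have := connector_class_ordered gt; rewrite e eqxx.
Qed.

Lemma few_same_page_connectors : n <= 6.
Proof.
have := leq_card _ connector_class_inj.
by rewrite card_ord card_prod card_ord card_bool.
Qed.

End Connectors.

Lemma exists_split_connector v1 v2 l r n (cs : 'I_n -> vert) :
  6 < n -> injective cs -> inQE L v1 v2 ->
  (forall k, adj (cs k) l) -> (forall k, adj (cs k) r) -> p l != p r ->
  p v1 < p l < p v2 -> p v1 < p r < p v2 ->
  exists k, inS L l (cs k) != inS L r (cs k).
Proof.
move=> n6 cs_inj q12 adj_l adj_r nlr inl inr.
wlog lr : l r adj_l adj_r inl inr {nlr} / p l < p r.
  move=> W; case: (ltngtP (p l) (p r)) nlr => [lr | rl | //] _; first exact: W.
  by have [k] := W r l adj_r adj_l inr inl rl; exists k; rewrite eq_sym.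
move: inl inr => /andP[v1l _] /andP[_ rv2].
case: (pickP (fun k => inS L l (cs k) != inS L r (cs k))) => [k | same]; first by exists k.
have same_page k : inS L l (cs k) = inS L r (cs k) by apply/eqP/negbFE.
have := few_same_page_connectors q12 cs_inj adj_l adj_r v1l lr rv2 same_page.
by rewrite leqNgt n6.
Qed.

Definition mixed_triangle c x y := [&& inSE L x y, inSE L c x & inQE L c y].

Lemma mixed_triangles_before c1 x1 y1 c2 x2 y2 :
  uniq [:: x1; y1; x2; y2] -> mixed_triangle c1 x1 y1 -> mixed_triangle c2 x2 y2 ->
  p c1 < p c2 -> all (fun x => p c2 < p x) [:: x1; y1; x2; y2] -> False.
Proof.
rewrite -(map_inj_uniq pos_inj) /= !inE !negb_or -!andbA andbT => distinct.
case/and3P => xy1 cx1 cy1 /and3P[xy2 cx2 cy2] c12 /and5P[c2x1 c2y1 c2x2 c2y2 _].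
have y12 : p y1 < p y2.
  by case: (ltnP (p y1) (p y2)) => // ?; exfalso; apply: (queue_no_nest cy1 cy2); lia.
have x21 : p x2 < p x1.
  by case: (ltnP (p x2) (p x1)) => // ?; exfalso; apply: (stack_no_cross cx1 cx2); lia.
have y2x1 : p y2 < p x1.
  by case: (ltnP (p y2) (p x1)) => // ?; exfalso; apply: (stack_no_cross cx1 xy2); lia.
rewrite inSE_sym in xy1.
have x2y1 : p x2 < p y1.
  by case: (ltnP (p x2) (p y1)) => // ?; exfalso; apply: (stack_no_cross cx2 xy1); lia.
by apply: (stack_no_cross xy2 xy1).
Qed.

End MixedLayout.

Definition max_pos (L : layout) := \max_v pos L v.

Definition rev_layout (L : layout) : layout :=
  Layout (fun v => max_pos L - pos L v) (inS L).

Lemma rev_layout_ltn L u v :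
  (pos (rev_layout L) u < pos (rev_layout L) v) = (pos L v < pos L u).
Proof.
have := @leq_bigmax _ (pos L) u; have := @leq_bigmax _ (pos L) v.
by rewrite -/(max_pos L) /=; lia.
Qed.

Lemma rev_layout_leq L u v :
  (pos (rev_layout L) u <= pos (rev_layout L) v) = (pos L v <= pos L u).
Proof. by rewrite leqNgt rev_layout_ltn -leqNgt. Qed.

Lemma rev_layout_mixed L : is_mixed_layout L -> is_mixed_layout (rev_layout L).
Proof.
move=> HL; have [pos_inj' inS_sym' stack queue] := HL; split => //.
- move=> u v /eqP; rewrite eqn_leq !rev_layout_leq -eqn_leq.
  by move=> /eqP/pos_inj' ->.
- move=> a b c d ab cd; rewrite /cross /lt_v !rev_layout_ltn => ba dc [ca bc db].
  by apply: (stack d c b a); rewrite 1?inSE_sym //; split.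
- move=> a b c d ab cd; rewrite /nest /lt_v !rev_layout_ltn => ba dc [ca dc' bd].
  by apply: (queue b a d c); rewrite 1?inQE_sym //; split.
Qed.

Definition twins_inside L v1 v2 (i : 'I_19) :=
  [/\ lt_v L v1 (VS i), lt_v L (VS i) v2, lt_v L v1 (VT i) & lt_v L (VT i) v2].

Definition outside L v1 v2 c := (pos L c <= pos L v1) || (pos L v2 <= pos L c).

Definition split_connector L (i : 'I_19) (k : 'I_7) := exists x y,
  perm_eq [:: x; y] [:: VS i; VT i] /\ mixed_triangle L (VC i k) x y.

Lemma gadget_split_connector L v1 v2 i : is_mixed_layout L -> inQE L v1 v2 ->
  twins_inside L v1 v2 i -> exists k, split_connector L i k /\ outside L v1 v2 (VC i k).
Proof.
move=> HL q12; rewrite /twins_inside /lt_v => -[v1s sv2 v1t tv2].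
have cS k : adj (VC i k) (VS i) by rewrite /adj /= eqxx.
have cT k : adj (VC i k) (VT i) by rewrite /adj /= eqxx.
have st : adj (VS i) (VT i) by rewrite /adj /= eqxx.
have VC_inj : injective (VC i) by move=> k k' [].
have s_in : pos L v1 < pos L (VS i) < pos L v2 by rewrite v1s sv2.
have t_in : pos L v1 < pos L (VT i) < pos L v2 by rewrite v1t tv2.
have [k mixed] :=
  exists_split_connector HL (n := 7) isT VC_inj q12 cS cT (adj_pos_neq HL st) s_in t_in.
exists k; split; last first.
  rewrite /outside leqNgt (leqNgt (pos L v2)) -negb_and.
  apply: contra mixed => /andP[v1c cv2].
  by rewrite !(inS_sym HL _ (VC i k)) !(inS_under_queue_edge HL q12) ?v1c ?v1s ?v1t.
have Sst : inSE L (VS i) (VT i).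
  by rewrite /inSE st (inS_under_queue_edge HL q12 st) ?v1s ?v1t.
rewrite !(inS_sym HL _ (VC i k)) in mixed.
case: (boolP (inS L (VC i k) (VS i))) mixed => [Ss | Qs] /=; rewrite ?negbK => Qt.
- exists (VS i), (VT i); split => //.
  by rewrite /mixed_triangle Sst /inSE /inQE cS cT Ss Qt.
- exists (VT i), (VS i); split; first exact: (permEl (perm_catC [:: VT i] [:: VS i])).
  by rewrite /mixed_triangle (inSE_sym HL) Sst /inSE /inQE cS cT Qs Qt.
Qed.

Lemma twins_uniq (i j : 'I_19) : i != j -> uniq [:: VS i; VT i; VS j; VT j].
Proof.
have VS_inj : injective VS by move=> ? ? [].
have VT_inj : injective VT by move=> ? ? [].
have ST x y : (VS x == VT y) = false by apply/eqP.
have TS x y : (VT x == VS y) = false by apply/eqP.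
by move=> nij; rewrite /= !inE (inj_eq VS_inj) (inj_eq VT_inj) !ST !TS (negbTE nij).
Qed.

Lemma split_connectors_before L v1 v2 i j ki kj : is_mixed_layout L -> i != j ->
  twins_inside L v1 v2 i -> twins_inside L v1 v2 j ->
  split_connector L i ki -> split_connector L j kj ->
  pos L (VC i ki) <= pos L v1 -> pos L (VC j kj) <= pos L v1 -> False.
Proof.
move=> HL; wlog cij : i j ki kj / pos L (VC i ki) < pos L (VC j kj).
  move=> W nij Ii Ij Si Sj ci cj.
  case: (ltngtP (pos L (VC i ki)) (pos L (VC j kj))) => [lt | gt | /(pos_inj HL) [eij _]].
  - exact: (W i j ki kj).
  - by apply: (W j i kj ki); rewrite 1?eq_sym.
  - by rewrite eij eqxx in nij.
move=> nij Ii Ij [xi [yi [pi Ti]]] [xj [yj [pj Tj]]] _ cj.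
apply: (mixed_triangles_before HL _ Ti Tj cij).
  by rewrite (perm_uniq (perm_cat pi pj)) twins_uniq.
move: Ii Ij; rewrite /twins_inside /lt_v => -[v1si _ v1ti _] [v1sj _ v1tj _].
apply/allP => x; rewrite (perm_mem (perm_cat pi pj)) !inE.
by case/or4P => /eqP ->; apply: leq_ltn_trans cj _.
Qed.

Lemma split_connectors_after L v1 v2 i j ki kj : is_mixed_layout L -> i != j ->
  twins_inside L v1 v2 i -> twins_inside L v1 v2 j ->
  split_connector L i ki -> split_connector L j kj ->
  pos L v2 <= pos L (VC i ki) -> pos L v2 <= pos L (VC j kj) -> False.
Proof.
move=> HL nij Ii Ij Si Sj ci cj.
have rev_inside k : twins_inside L v1 v2 k -> twins_inside (rev_layout L) v2 v1 k.
  by rewrite /twins_inside /lt_v !rev_layout_ltn => -[].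
apply: (split_connectors_before (rev_layout_mixed HL) nij (rev_inside _ Ii) (rev_inside _ Ij)
  Si Sj); by rewrite rev_layout_leq.
Qed.

Lemma split_connectors_same_side L v1 v2 i j ki kj : is_mixed_layout L -> i != j ->
  twins_inside L v1 v2 i -> twins_inside L v1 v2 j ->
  split_connector L i ki -> split_connector L j kj ->
  outside L v1 v2 (VC i ki) -> outside L v1 v2 (VC j kj) ->
  (pos L (VC i ki) <= pos L v1) = (pos L (VC j kj) <= pos L v1) -> False.
Proof.
move=> HL nij Ii Ij Si Sj; rewrite /outside => Oi Oj.
case Ei: (pos L (VC i ki) <= pos L v1) in Oi * => Esame.
  exact: (split_connectors_before HL nij Ii Ij Si Sj Ei (esym Esame)).
rewrite -Esame in Oj; exact: (split_connectors_after HL nij Ii Ij Si Sj Oi Oj).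
Qed.

Theorem lemma3 :
  ~ exists L : layout, is_mixed_layout L /\
    exists (v1 v2 : vert) (i1 i2 i3 : 'I_19),
      [/\ inQE L v1 v2, lt_v L v1 v2,
          uniq [:: i1; i2; i3] &
          forall i, i \in [:: i1; i2; i3] ->
            [/\ lt_v L v1 (VS i), lt_v L (VS i) v2,
                lt_v L v1 (VT i) & lt_v L (VT i) v2]].
Proof.
case=> L [HL [v1 [v2 [i1 [i2 [i3 [q12 _ uniq_i twins]]]]]]].
have m1 : i1 \in [:: i1; i2; i3] by rewrite inE eqxx.
have m2 : i2 \in [:: i1; i2; i3] by rewrite !inE eqxx orbT.
have m3 : i3 \in [:: i1; i2; i3] by rewrite !inE eqxx !orbT.
have I1 := twins _ m1; have I2 := twins _ m2; have I3 := twins _ m3.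
have [k1 [S1 O1]] := gadget_split_connector HL q12 I1.
have [k2 [S2 O2]] := gadget_split_connector HL q12 I2.
have [k3 [S3 O3]] := gadget_split_connector HL q12 I3.
move: uniq_i; rewrite /= !inE negb_or andbT => /andP[/andP[n12 n13] n23].
pose before i k := pos L (VC i k) <= pos L v1.
have [e | [e | e]] : before i1 k1 = before i2 k2 \/ before i1 k1 = before i3 k3 \/
    before i2 k2 = before i3 k3.
  by case: (before i1 k1); case: (before i2 k2); case: (before i3 k3); auto.
- exact: (split_connectors_same_side HL n12 I1 I2 S1 S2 O1 O2 e).
- exact: (split_connectors_same_side HL n13 I1 I3 S1 S3 O1 O3 e).
- exact: (split_connectors_same_side HL n23 I2 I3 S2 S3 O2 O3 e).
Qed.
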